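(* Let $M\in\mathbb{N}$ and let $c$ and $c_j$, $j\geq 1$, be proper series in $\ell_{\infty,M}(X^\ast,\mathbb{K})$ with $\|c-c_j\|_{\ell_\infty,M}\to 0$ as $j\to\infty$. Then for $N\in\mathbb{N}$ sufficiently large, $$\sum_{n=1}^\infty \|c^{\sqcup\!\sqcup\, n}-c_j^{\sqcup\!\sqcup\, n}\|_{\ell_\infty,N}\to 0\quad\text{as } j\to\infty.$$
   Context: $\mathbb{K}\in\{\mathbb{R},\mathbb{C}\}$. $X=\{x_0,\ldots,x_m\}$ is a finite alphabet, $X^\ast$ its set of words (including the empty word $\emptyset$), $|\eta|$ the length of $\eta$. A series $c\colon X^\ast\to\mathbb{K}$ is proper if $(c,\emptyset)=0$. For $M>0$, $\|c\|_{\ell_\infty,M}=\sup_\eta|(c,\eta)|/(M^{|\eta|}|\eta|!)$ and $\ell_{\infty,M}(X^\ast,\mathbb{K})$ is the Banach space of series with finite such norm. The shuffle product is the bilinear product determined on words by $(x_i\eta)\sqcup\!\sqcup(x_j\xi)=x_i(\eta\sqcup\!\sqcup(x_j\xi))+x_j((x_i\eta)\sqcup\!\sqcup\xi)$, $\eta\sqcup\!\sqcup\emptyset=\emptyset\sqcup\!\sqcup\eta=\eta$, extended bilinearly to series; $c^{\sqcup\!\sqcup n}$ denotes the $n$-fold shuffle power. *)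

From HB Require Import structures.
From mathcomp Require Import all_boot all_order all_algebra.
From mathcomp Require Import all_classical all_reals all_analysis.
From mathcomp Require Import complex.
Set Implicit Arguments.
Unset Strict Implicit.
Unset Printing Implicit Defensive.
Import Order.TTheory GRing.Theory Num.Theory.
Local Open Scope ring_scope.

(* Alphabet X = {x_0, ..., x_m} is 'I_m.+1; words X^* are sequences of letters. *)
Definition word (m : nat) := seq 'I_m.+1.

(* Shuffle of two words, as a list of words with multiplicities:
   (x_i u) sh (x_j v) = x_i (u sh x_j v) + x_j (x_i u sh v),
   u sh [] = [] sh u = u. *)
Fixpoint shw {m : nat} (u v : word m) {struct u} : seq (word m) :=
  match u with
  | [::] => [:: v]
  | a :: u' =>
      (fix shv (v : word m) : seq (word m) :=
         match v with
         | [::] => [:: u]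
         | b :: v' => map (cons a) (shw u' v) ++ map (cons b) (shv v')
         end) v
  end.

Definition series (K : Type) (m : nat) := word m -> K.

Section Series.
Variables (K : comNzRingType) (m : nat).

Definition proper (c : series K m) : Prop := c [::] = 0.

(* Bilinear extension of the word shuffle to series:
   (c sh d, w) = sum_{u, v} (c,u) (d,v) (u sh v, w), where only |u|+|v| = |w|
   contributes. *)
Definition shuffle (c d : series K m) : series K m := fun w =>
  \sum_(k < (size w).+1) \sum_(u : k.-tuple 'I_m.+1)
     \sum_(v : (size w - k).-tuple 'I_m.+1)
        (c u * d v *+ count_mem w (shw (u : word m) (v : word m))).

Definition unit_series : series K m := fun w => (w == [::])%:R.

Fixpoint shpow (c : series K m) (n : nat) : series K m :=
  match n with
  | 0 => unit_series
  | n'.+1 => shuffle c (shpow c n')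
  end.

Definition sub_series (c d : series K m) : series K m := fun w => c w - d w.
End Series.

Section Norm.
Variables (R : realType) (K : comNzRingType) (absK : K -> R) (m : nat).
Local Open Scope classical_set_scope.
Local Open Scope ereal_scope.

Definition linf_norm (M : nat) (c : series K m) : \bar R :=
  ereal_sup [set ((absK (c w) / ((M ^ size w)%:R * (size w)`!%:R))%R)%:E
            | w in [set: word m]].

Definition in_linf (M : nat) (c : series K m) : Prop := linf_norm M c < +oo.

Definition lemma3p5_stmt : Prop :=
  forall (M : nat) (c : series K m) (cj : nat -> series K m),
    (0 < M)%N ->
    proper c -> in_linf M c ->
    (forall j, (0 < j)%N -> proper (cj j) /\ in_linf M (cj j)) ->
    (fun j => linf_norm M (sub_series c (cj j))) @ \oo --> 0 ->
    exists N0 : nat, forall N : nat, (N0 <= N)%N ->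
      (fun j => \sum_(1 <= n <oo)
                  linf_norm N (sub_series (shpow c n) (shpow (cj j) n))) @ \oo
      --> 0.
End Norm.

From Pilot Require Import Defs.
From HB Require Import structures.
From mathcomp Require Import all_boot all_order all_algebra.
From mathcomp Require Import all_classical all_reals all_analysis.
From mathcomp Require Import complex.
From mathcomp Require Import ring.
Set Implicit Arguments.
Unset Strict Implicit.
Unset Printing Implicit Defensive.
Import Order.TTheory GRing.Theory Num.Theory.

(* Say that a series c is dominated by a profile b : nat -> R when
   |(c,w)| <= b(|w|) |w|!.  Summed over all words u, v of lengths k and |w| - k,
   the word w occurs 'C(|w|, k) times in the shuffles of u and v, so the
   factorials cancel and domination turns shuffle products into convolutions
   of profiles.  A proper c with ||c||_M <= a is dominated by k |-> A^k (k >= 1)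
   for A = (a + 1) M, and the n-fold convolution of this profile is at most
   (5A)^k / 4^n.  Telescoping c^n - d^n into n shuffles, each containing one
   factor c - d whose profile carries eps = ||c - d||_M, dominates c^n - d^n by
   n eps (5A)^k / 4^n; hence ||c^n - d^n||_N <= eps / 2^n once N >= 5A, and
   the sum over n is at most eps = ||c - c_j||_M, which tends to 0. *)

Section BigTuple.
Variables (R : Type) (idx : R) (op : Monoid.com_law idx) (T : finType).

Lemma big_tuple0 (F : 0.-tuple T -> R) :
  \big[op/idx]_(t : 0.-tuple T) F t = F [tuple].
Proof.
by rewrite (big_pred1 [tuple]) // => t; apply/esym/eqP/tuple0.
Qed.

Lemma big_tuple_cons k (F : k.+1.-tuple T -> R) :
  \big[op/idx]_(t : k.+1.-tuple T) F t =
  \big[op/idx]_(x : T) \big[op/idx]_(t : k.-tuple T) F [tuple of x :: t].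
Proof.
rewrite pair_big (reindex (fun p : T * k.-tuple T => [tuple of p.1 :: p.2])) //.
exists (fun t : k.+1.-tuple T => (thead t, [tuple of behead t])).
  by move=> [x t] _; congr pair; apply: val_inj.
by move=> t _; apply: val_inj; case: t => -[].
Qed.

End BigTuple.

Section ShuffleCount.
Variable m : nat.
Implicit Types (a x y : 'I_m.+1) (u v w : word m).

Lemma shw_nil_r u : shw u [::] = [:: u].
Proof. by case: u. Qed.

Lemma shw_cons x y u v :
  shw (x :: u) (y :: v) = map (cons x) (shw u (y :: v)) ++ map (cons y) (shw (x :: u) v).
Proof. by []. Qed.

Lemma count_mem_map_cons x w (s : seq (word m)) :
  count_mem w (map (cons x) s) =
  if w is a :: w' then ((x == a) * count_mem w' s)%N else 0%N.
Proof.
case: w => [|a w]; elim: s => [|t s IH] //=; first by rewrite muln0.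
by rewrite IH mulnDr eqseq_cons; case: (x == a); rewrite ?mul1n ?mul0n.
Qed.

Lemma sum_tuple_eq w l : \sum_(v : l.-tuple 'I_m.+1) (w == v :> word m) = (size w == l).
Proof.
have [sw|swl] := eqVneq (size w) l; last first.
  rewrite big1 // => v _; apply/eqP; rewrite eqb0.
  by apply: contra swl => /eqP ->; rewrite size_tuple.
rewrite (bigD1 (Tuple (introT eqP sw))) //= eqxx big1 // => v.
apply: contraNeq => wv; rewrite eqb0 negbK in wv.
by rewrite -val_eqE /= (eqP wv).
Qed.

Lemma sum_pred1_mul a (G : nat) : \sum_(y : 'I_m.+1) ((y == a) * G)%N = G.
Proof.
by rewrite (bigD1 a) //= eqxx mul1n big1 ?addn0 // => y /negbTE ->; rewrite mul0n.
Qed.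

Lemma sum_count_shw0l w l :
  \sum_(u : 0.-tuple 'I_m.+1) \sum_(v : l.-tuple 'I_m.+1)
      count_mem w (shw (u : word m) (v : word m))
  = ((size w == 0 + l) * 'C(0 + l, 0))%N.
Proof.
rewrite big_tuple0 bin0 muln1 -sum_tuple_eq.
by apply: eq_bigr => v _; rewrite /= addn0 eq_sym.
Qed.

Lemma sum_count_shw0r w k :
  \sum_(u : k.-tuple 'I_m.+1) \sum_(v : 0.-tuple 'I_m.+1)
      count_mem w (shw (u : word m) (v : word m))
  = ((size w == k + 0) * 'C(k + 0, k))%N.
Proof.
rewrite addn0 binn muln1 -sum_tuple_eq.
by apply: eq_bigr => u _; rewrite big_tuple0 /= shw_nil_r /= addn0 eq_sym.
Qed.

(* Every shuffle of x :: u and y :: v starts with x or with y: this is Pascal's rule. *)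
Lemma sum_count_shw w k l :
  \sum_(u : k.-tuple 'I_m.+1) \sum_(v : l.-tuple 'I_m.+1)
      count_mem w (shw (u : word m) (v : word m))
  = ((size w == k + l) * 'C(k + l, k))%N.
Proof.
elim: w k l => [|a w IH] [|k] [|l]; rewrite ?sum_count_shw0l ?sum_count_shw0r //.
  rewrite big_tuple_cons big1 // => x _; rewrite big1 // => u _.
  rewrite big_tuple_cons big1 // => y _; rewrite big1 // => v _.
  by rewrite shw_cons count_cat !count_mem_map_cons.
have left_first : (\sum_x \sum_(u : k.-tuple 'I_m.+1) \sum_y \sum_(v : l.-tuple 'I_m.+1)
    ((x == a) * count_mem w (shw (u : word m) (y :: (v : word m)))))%N
    = ((size w == k + l.+1) * 'C(k + l.+1, k))%N.
  rewrite -IH -[RHS](sum_pred1_mul a); apply: eq_bigr => x _.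
  rewrite big_distrr; apply: eq_bigr => u _.
  by rewrite big_tuple_cons big_distrr; apply: eq_bigr => y _; rewrite big_distrr.
have right_first : (\sum_x \sum_(u : k.-tuple 'I_m.+1) \sum_y \sum_(v : l.-tuple 'I_m.+1)
    ((y == a) * count_mem w (shw (x :: (u : word m)) (v : word m))))%N
    = ((size w == k.+1 + l) * 'C(k.+1 + l, k.+1))%N.
  rewrite -IH big_tuple_cons; apply: eq_bigr => x _; apply: eq_bigr => u _.
  by rewrite -[RHS](sum_pred1_mul a); apply: eq_bigr => y _; rewrite big_distrr.
rewrite /= addSn eqSS binS mulnDr addnC -left_first -addSnnS -right_first big_tuple_cons.
rewrite -big_split; apply: eq_bigr => x _; rewrite -big_split; apply: eq_bigr => u _.
rewrite big_tuple_cons -big_split; apply: eq_bigr => y _; rewrite -big_split.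
by apply: eq_bigr => v _; rewrite shw_cons count_cat !count_mem_map_cons.
Qed.

End ShuffleCount.

Local Open Scope ring_scope.

Section Profiles.
Variable R : realType.
Implicit Types (A : R) (b g : nat -> R).

Definition conv b g n : R := \sum_(i < n.+1) b i * g (n - i)%N.

Lemma conv_scalel a b g n : conv (fun i => a * b i) g n = a * conv b g n.
Proof. by rewrite /conv mulr_sumr; apply: eq_bigr => i _; rewrite mulrA. Qed.

Lemma conv_scaler a b g n : conv b (fun i => a * g i) n = a * conv b g n.
Proof. by rewrite /conv mulr_sumr; apply: eq_bigr => i _; rewrite mulrCA. Qed.

Definition geom0 A k : R := if k is 0 then 0 else A ^+ k.

Lemma sum_geometric_fifth k : \sum_(i < k) 5^-1 * 5^-1 ^+ i <= 4^-1 :> R.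
Proof.
have fifth_gt0 : 0 < 5^-1 :> R by rewrite invr_gt0.
have := geometric_le_lim k (ltW fifth_gt0) fifth_gt0.
rewrite gtr0_norm // invf_lt1 ?ltr1n // => /(_ isT).
have -> : 5^-1 / (1 - 5^-1) = 4^-1 :> R by field.
by rewrite /series /= big_mkord.
Qed.

(* Since A^i (5A)^(k-i) = 5^-i (5A)^k, the convolution only sums a geometric
   series of ratio 1/5. *)
Lemma conv_geom0_le A n k : 0 <= A ->
  conv (geom0 A) (fun i => (5 * A) ^+ i / 4 ^+ n) k <= (5 * A) ^+ k / 4 ^+ n.+1.
Proof.
move=> A0; rewrite /conv big_ord_recl mul0r add0r.
set C := (5 * A) ^+ k / 4 ^+ n.
have term (i : 'I_k) :
    geom0 A (lift ord0 i) * ((5 * A) ^+ (k - lift ord0 i) / 4 ^+ n) = C * (5^-1 * 5^-1 ^+ i).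
  rewrite /= /bump /= add1n /C.
  have -> : (5 * A) ^+ k = (5 * A) ^+ (k - i.+1) * (5 * A) ^+ i.+1.
    by rewrite -exprD subnK.
  rewrite !exprMn exprVn [5 ^+ i.+1]exprS.
  by field; rewrite !expf_neq0 // pnatr_eq0.
rewrite (eq_bigr _ (fun i _ => term i)) -mulr_sumr exprSr invfM mulrA.
by apply: ler_wpM2l (sum_geometric_fifth k); rewrite /C divr_ge0 ?exprn_ge0 ?mulr_ge0.
Qed.

End Profiles.

Section AbsoluteValue.
Variables (R : realType) (K : comNzRingType) (absK : K -> R) (m : nat).
Hypothesis absK0 : absK 0 = 0.
Hypothesis absK_ge0 : forall x, 0 <= absK x.
Hypothesis absKD : forall x y, absK (x + y) <= absK x + absK y.
Hypothesis absKM : forall x y, absK (x * y) = absK x * absK y.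
Hypothesis absKN : forall x, absK (- x) = absK x.
Hypothesis absK1 : absK 1 <= 1.
Implicit Types (c d f : Defs.series K m) (b g : nat -> R).

Lemma absK_sum (I : Type) (r : seq I) (P : pred I) (F : I -> K) :
  absK (\sum_(i <- r | P i) F i) <= \sum_(i <- r | P i) absK (F i).
Proof.
apply: (big_ind2 (fun x y => absK x <= y)); first by rewrite absK0.
  by move=> x1 y1 x2 y2 h1 h2; apply: le_trans (absKD _ _) (lerD h1 h2).
by [].
Qed.

Lemma absK_mulrn x n : absK (x *+ n) <= absK x *+ n.
Proof.
elim: n => [|n IH]; first by rewrite !mulr0n absK0.
by rewrite !mulrS; apply: le_trans (absKD _ _) (lerD (lexx _) IH).
Qed.

Definition dominated c b := forall w : word m, absK (c w) <= b (size w) * (size w)`!%:R.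

Lemma dominated_le c b g : dominated c b -> (forall k, b k <= g k) -> dominated c g.
Proof. by move=> hc hbg w; apply: le_trans (hc w) _; rewrite ler_wpM2r. Qed.

Lemma dominated_add c d b g : dominated c b -> dominated d g ->
  dominated (fun w => c w + d w) (fun k => b k + g k).
Proof. by move=> hc hd w; rewrite mulrDl; apply: le_trans (absKD _ _) (lerD _ _). Qed.

(* The binomial count of sum_count_shw is cancelled by |w|! = k! (|w| - k)! 'C(|w|, k). *)
Lemma dominated_shuffle c d b g :
  dominated c b -> dominated d g -> dominated (shuffle c d) (conv b g).
Proof.
move=> hc hd w; set n := size w.
rewrite /shuffle /conv mulr_suml; apply: le_trans (absK_sum _ _ _) _.
apply: ler_sum => k _; have kn : (k <= n)%N by rewrite -ltnS.
apply: (@le_trans _ _ (\sum_(u : k.-tuple 'I_m.+1) \sum_(v : (n - k).-tuple 'I_m.+1)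
   (b k * k`!%:R * (g (n - k)%N * (n - k)`!%:R))
     *+ count_mem w (shw (u : word m) (v : word m)))).
  apply: le_trans (absK_sum _ _ _) _; apply: ler_sum => u _.
  apply: le_trans (absK_sum _ _ _) _; apply: ler_sum => v _.
  apply: le_trans (absK_mulrn _ _) _; rewrite ler_wMn2r // absKM.
  by apply: ler_pM => //; [move: (hc u) | move: (hd v)]; rewrite size_tuple.
under eq_bigr => u _ do rewrite sumrMnr.
rewrite sumrMnr sum_count_shw subnKC // eqxx mul1n -(bin_fact kn) !natrM -mulr_natr.
by rewrite le_eqVlt; apply/orP; left; apply/eqP; ring.
Qed.

Lemma shuffle_subl c d f :
  shuffle (Defs.sub_series c d) f = Defs.sub_series (shuffle c f) (shuffle d f).
Proof.
apply/funext => w; rewrite /shuffle /Defs.sub_series -sumrB; apply: eq_bigr => k _.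
rewrite -sumrB; apply: eq_bigr => u _; rewrite -sumrB; apply: eq_bigr => v _.
by rewrite mulrBl mulrnBl.
Qed.

Lemma shuffle_subr c d f :
  shuffle c (Defs.sub_series d f) = Defs.sub_series (shuffle c d) (shuffle c f).
Proof.
apply/funext => w; rewrite /shuffle /Defs.sub_series -sumrB; apply: eq_bigr => k _.
rewrite -sumrB; apply: eq_bigr => u _; rewrite -sumrB; apply: eq_bigr => v _.
by rewrite mulrBr mulrnBl.
Qed.

Lemma shpow_subS c d n :
  Defs.sub_series (shpow c n.+1) (shpow d n.+1) =
  fun w => shuffle (Defs.sub_series c d) (shpow c n) w +
            shuffle d (Defs.sub_series (shpow c n) (shpow d n)) w.
Proof.
rewrite shuffle_subl shuffle_subr; apply/funext => w.
by rewrite /Defs.sub_series /= addrA subrK.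
Qed.

Lemma dominated_shpow A c n : 0 <= A -> dominated c (geom0 A) ->
  dominated (shpow c n) (fun k => (5 * A) ^+ k / 4 ^+ n).
Proof.
move=> A0 hc; elim: n => [|n IH] /=.
  case=> [|a w]; rewrite /unit_series /= ?expr0 ?divr1 ?mulr1 // absK0.
  by rewrite mulr_ge0 ?exprn_ge0 ?mulr_ge0.
apply: dominated_le (dominated_shuffle hc IH) _ => k; exact: conv_geom0_le.
Qed.

Lemma dominated_shpow_sub A eps c d n : 0 <= A -> 0 <= eps ->
  dominated c (geom0 A) -> dominated d (geom0 A) ->
  dominated (Defs.sub_series c d) (fun k => eps * geom0 A k) ->
  dominated (Defs.sub_series (shpow c n) (shpow d n))
            (fun k => eps * n%:R * ((5 * A) ^+ k / 4 ^+ n)).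
Proof.
move=> A0 eps0 hc hd hcd; elim: n => [|n IH].
  by move=> w; rewrite /Defs.sub_series subrr absK0 !mulr0 mul0r.
rewrite shpow_subS.
apply: dominated_le (dominated_add (dominated_shuffle hcd (dominated_shpow n A0 hc))
                                   (dominated_shuffle hd IH)) _ => k.
rewrite /= conv_scalel conv_scaler; set s := conv _ _ k.
have -> : eps * s + eps * n%:R * s = eps * n.+1%:R * s by rewrite mulrS; ring.
by rewrite ler_wpM2l ?mulr_ge0 // conv_geom0_le.
Qed.

Lemma dominated_proper (M : nat) f (x y L : R) :
  0 <= y -> 1 <= L -> x <= y * L -> Defs.proper f ->
  (forall w, absK (f w) <= x * ((M ^ size w)%:R * (size w)`!%:R)) ->
  dominated f (fun k => y * geom0 (L * M%:R) k).
Proof.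
move=> y0 L1 xyL f0 hf w; case e: (size w) => [|k].
  by rewrite (size0nil e) f0 absK0 mulr0 mul0r.
apply: le_trans (hf w) _; rewrite e mulrA ler_wpM2r //= natrX exprMn mulrA.
rewrite ler_wpM2r ?exprn_ge0 //; apply: le_trans xyL _.
by rewrite ler_wpM2l // ler_eXnr.
Qed.

Lemma linf_norm_ge0 N c : (0 <= linf_norm absK N c)%E.
Proof.
apply: le_trans (ereal_sup_ubound _); last by exists [::].
by rewrite lee_fin divr_ge0.
Qed.

Lemma linf_norm_leP N c x : (0 < N)%N ->
  (linf_norm absK N c <= x%:E)%E <->
  forall w, absK (c w) <= x * ((N ^ size w)%:R * (size w)`!%:R).
Proof.
move=> N0; have weight_gt0 k : 0 < (N ^ k)%:R * k`!%:R :> R.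
  by rewrite mulr_gt0 // ltr0n ?expn_gt0 ?N0 ?fact_gt0.
split=> [hc w | hc].
  rewrite -ler_pdivrMr // -lee_fin; apply: le_trans hc.
  by apply: ereal_sup_ubound; exists w.
by apply: ge_ereal_sup => _ [w _ <-]; rewrite lee_fin ler_pdivrMr.
Qed.

Lemma linf_norm_shpow_sub_le N A eps c d n : (0 < N)%N -> 0 <= A -> 0 <= eps ->
  5 * A <= N%:R ->
  dominated c (geom0 A) -> dominated d (geom0 A) ->
  dominated (Defs.sub_series c d) (fun k => eps * geom0 A k) ->
  (linf_norm absK N (Defs.sub_series (shpow c n) (shpow d n)) <= (eps / 2 ^+ n)%:E)%E.
Proof.
move=> N0 A0 eps0 AN hc hd hcd; apply/linf_norm_leP => // w.
apply: le_trans (dominated_shpow_sub n A0 eps0 hc hd hcd w) _.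
set k := size w; rewrite natrX [in X in _ <= X]mulrA ler_wpM2r //.
have n_le : n%:R <= 2 ^+ n :> R by rewrite -natrX ler_nat ltnW // ltn_expl.
have AN_k : (5 * A) ^+ k <= N%:R ^+ k :> R by apply: lerXn2r; rewrite // nnegrE ?mulr_ge0.
apply: (@le_trans _ _ (eps * 2 ^+ n * (N%:R ^+ k / 4 ^+ n))).
  apply: ler_pM.
  - by rewrite mulr_ge0.
  - by rewrite divr_ge0 ?exprn_ge0 ?mulr_ge0.
  - by rewrite ler_wpM2l.
  - by rewrite ler_wpM2r ?invr_ge0 ?exprn_ge0.
have -> : 4 ^+ n = 2 ^+ n * 2 ^+ n :> R by rewrite -exprMn -natrM.
have : 2 ^+ n != 0 :> R by rewrite expf_neq0 // pnatr_eq0.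
set t := 2 ^+ n => t0.
by rewrite le_eqVlt; apply/orP; left; apply/eqP; field.
Qed.

Lemma sum_half_pow_le (eps : R) :
  0 <= eps -> (\sum_(1 <= n <oo) (eps / 2 ^+ n)%:E <= eps%:E)%E.
Proof.
move=> eps0; apply: lime_le.
  by apply: is_cvg_ereal_nneg_natsum => n _; rewrite lee_fin divr_ge0 ?exprn_ge0.
apply: nearW => -[|n]; first by rewrite big_geq.
rewrite sumEFin lee_fin -mulr_sumr ler_piMr //.
have half_gt0 : 0 < 2^-1 :> R by rewrite invr_gt0.
under eq_bigr do rewrite -exprVn.
rewrite -add1n geometric_partial_tail.
apply: le_trans (geometric_le_lim _ (ltW _) half_gt0 _) _ => //.
  by rewrite gtr0_norm // invf_lt1 // ltr1n.
by rewrite le_eqVlt; apply/orP; left; apply/eqP; field.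
Qed.

Lemma sum_linf_norm_shpow_sub_le M N c d (a eps : R) :
  (0 < M)%N -> Defs.proper c -> Defs.proper d -> 0 <= a -> 0 <= eps <= 1 ->
  (linf_norm absK M c <= a%:E)%E -> (linf_norm absK M (Defs.sub_series c d) <= eps%:E)%E ->
  5 * ((a + 1) * M%:R) <= N%:R ->
  (\sum_(1 <= n <oo) linf_norm absK N (Defs.sub_series (shpow c n) (shpow d n)) <= eps%:E)%E.
Proof.
move=> M0 c0 d0 a0 /andP[eps0 eps1] /linf_norm_leP-/(_ M0) hc /linf_norm_leP-/(_ M0) hcd hN.
set A := (a + 1) * M%:R.
have a1_ge1 : 1 <= a + 1 :> R by rewrite lerDr.
have A_ge1 : 1 <= A by rewrite -[1%R]mulr1 ler_pM // ler1n.
have A0 : 0 <= A := le_trans ler01 A_ge1.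
have N0 : (0 < N)%N.
  by rewrite -(ltr0n R); apply: lt_le_trans hN; rewrite mulr_gt0 // (lt_le_trans ltr01 A_ge1).
have dc : dominated c (geom0 A).
  apply: dominated_le (dominated_proper ler01 a1_ge1 _ c0 hc) _ => [|k]; last by rewrite mul1r.
  by rewrite mul1r lerDl.
have dd : dominated d (geom0 A).
  apply: dominated_le
    (dominated_proper (M := M) (x := a + eps) ler01 a1_ge1 _ d0 _) _ => [|w|k].
  - by rewrite mul1r lerD2l.
  - have -> : d w = c w + - (c w - d w) by ring.
    rewrite mulrDl; apply: le_trans (absKD _ _) (lerD (hc w) _).
    by rewrite absKN; apply: hcd.
  - by rewrite mul1r.
have dcd : dominated (Defs.sub_series c d) (fun k => eps * geom0 A k).
  apply: (dominated_proper eps0 a1_ge1 _ _ hcd); first exact: ler_peMr.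
  by move: c0 d0; rewrite /Defs.proper /Defs.sub_series => -> ->; rewrite subrr.
apply: le_trans (sum_half_pow_le eps0); apply: lee_nneseries => n _.
  by rewrite linf_norm_ge0.
exact: linf_norm_shpow_sub_le N0 A0 eps0 hN dc dd dcd.
Qed.

Theorem cvg_sum_linf_norm_shpow_sub : lemma3p5_stmt absK m.
Proof.
move=> M c cj M0 c0 c_fin cj_ok cj_cvg.
set a := fine (linf_norm absK M c).
have a0 : 0 <= a by rewrite fine_ge0 ?linf_norm_ge0.
have c_le : (linf_norm absK M c <= a%:E)%E by rewrite fineK // ge0_fin_numE ?linf_norm_ge0.
have [eps_fin eps_cvg] := (fine_cvgP _ _).1 cj_cvg.
have eps_lt1 := cvgr_dist_lt _ _ eps_cvg 1 ltr01.
exists (Num.truncn (5 * ((a + 1) * M%:R))).+1 => N hN.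
have N_ge : 5 * ((a + 1) * M%:R) <= N%:R.
  by apply/ltW/(lt_le_trans (truncnS_gt _)); rewrite ler_nat.
apply: (squeeze_cvge (f := fun=> 0%E) _ (cvg_cst _) cj_cvg).
near=> j; have j0 : (0 < j)%N by near: j; exact: nbhs_infty_gt.
have [cj0 _] := cj_ok j j0.
have eps_fin_j : linf_norm absK M (Defs.sub_series c (cj j)) \is a fin_num.
  by near: j; exact: eps_fin.
have eps_lt1_j : `|0 - fine (linf_norm absK M (Defs.sub_series c (cj j)))| < 1.
  by near: j; exact: eps_lt1.
set eps := linf_norm absK M (Defs.sub_series c (cj j)) in eps_fin_j eps_lt1_j *.
have eps_le1 : fine eps <= 1.
  by move: eps_lt1_j; rewrite sub0r normrN => /ltW; apply: le_trans; exact: ler_norm.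
rewrite nneseries_ge0 => [/=|n _ _]; last exact: linf_norm_ge0.
rewrite -(fineK eps_fin_j); apply: sum_linf_norm_shpow_sub_le c_le _ N_ge => //.
- by rewrite fine_ge0 ?linf_norm_ge0.
- by rewrite fineK.
Unshelve. all: end_near.
Qed.

End AbsoluteValue.

Theorem lemma3p5 (R : realType) (m : nat) :
  lemma3p5_stmt (R := R) (K := R) (fun x : R => `|x|) m /\
  lemma3p5_stmt (R := R) (K := complex.complex R) (@complex.ComplexField.Normc.normc R) m.
Proof.
split; apply: cvg_sum_linf_norm_shpow_sub.
- exact: normr0.
- exact: normr_ge0.
- exact: ler_normD.
- exact: normrM.
- exact: normrN.
- by rewrite normr1.
- exact: complex.ComplexField.Normc.normc0.
- by move=> [a b]; rewrite /complex.ComplexField.Normc.normc sqrtr_ge0.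
- exact: complex.le_normcD.
- exact: complex.ComplexField.Normc.normcM.
- exact: complex.normcN.
- by rewrite complex.ComplexField.Normc.normc1.
Qed.
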